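(* In the setting of the context, define the operators on $\mathbb{C}^{2^n}$ $$\hat A:=\sum_{j=0}^{2^n-1}\sum_{q=0}^{2^n-1}\langle\phi_q|\chi_j\rangle\,e^{-i\theta_j}\,|q\rangle\langle j|,$$ $$\hat A':=\sum_{c_1=0}^{d-1}\sum_{c_2=0}^{d-1}\ \sum_{j:(0,j)\in V(G^{(c_1,c_2)})}\ \frac{1}{2^B}\sum_{b=0}^{2^B-1} g(j,c_1,b)\,e^{i\arg\langle\phi_{f(0,j,c_1)}|\chi_j\rangle-i\theta_j}\,|f(0,j,c_1)\rangle\langle j|,$$ where $g(j,c_1,b)=1$ if $b<k_{j,f(0,j,c_1)}$ and $g(j,c_1,b)=(-1)^b$ otherwise. Then $$\|\hat A'-\hat A\|\le\frac{2d^2}{2^B},$$ where $\|\cdot\|$ is the spectral norm.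
   Context: $n,d,B$ are positive integers. $\{|\chi_j\rangle\}_{j=0}^{2^n-1}$ and $\{|\phi_q\rangle\}_{q=0}^{2^n-1}$ are orthonormal bases of $\mathbb{C}^{2^n}$, $\{|j\rangle\}$ denotes the computational basis, and $\theta_j\in\mathbb{R}$ are arbitrary phases. $d$-sparsity: for every $j$ at most $d$ indices $q$ have $\langle\phi_q|\chi_j\rangle\ne0$, and for every $q$ at most $d$ indices $j$ have $\langle\phi_q|\chi_j\rangle\ne0$. Padded index function $f$: for fixed $j$, list all $q$ with $\langle\phi_q|\chi_j\rangle\ne0$ in increasing order, padded by further distinct indices to exactly $d$ distinct entries, and let $f(0,j,p)$ be the $p$-th entry ($p=0,\dots,d-1$); symmetrically $f(1,q,p)$ is the $p$-th entry of the padded increasing list of $j$ with $\langle\phi_q|\chi_j\rangle\ne0$. Graph $G$: bipartite with vertices $\{0,1\}\times\{0,\dots,2^n-1\}$ and edges $((0,j),(1,q))$ whenever $\langle\phi_q|\chi_j\rangle\ne0$; the edge $((0,j),(1,q))$ has colour $(c_1,c_2)$ where $f(0,j,c_1)=q$ and $f(1,q,c_2)=j$. $G^{(c_1,c_2)}$ is the subgraph formed by edges of colour $(c_1,c_2)$, and $V(G^{(c_1,c_2)})$ is the set of vertices incident to such edges. $\arg$ of a nonzero complex number is its argument. For each pair $(j,q)$, $k_{j,q}\in\{0,1,\dots,2^B\}$ is a $B$-bit rounding of $2^B|\langle\phi_q|\chi_j\rangle|$, i.e. an integer with $\bigl|2^B|\langle\phi_q|\chi_j\rangle|-k_{j,q}\bigr|\le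 1$. *)

From mathcomp Require Import all_boot all_algebra complex.
From mathcomp Require Import classical_sets reals trigo.
Set Implicit Arguments. Unset Strict Implicit. Unset Printing Implicit Defensive.
Import GRing.Theory Num.Theory.
Local Open Scope ring_scope.

Section Defs.
Variable R : realType.
Local Notation C := R[i].

Definition cabs (z : C) : R := Num.sqrt (complex.Re z ^+ 2 + complex.Im z ^+ 2).

Definition cinner N (u v : 'cV[C]_N) : C := \sum_(k < N) (u k 0)^* * v k 0.

Definition vnorm N (v : 'cV[C]_N) : R := Num.sqrt (\sum_(k < N) cabs (v k 0) ^+ 2).

Definition specnorm m N (A : 'M[C]_(m, N)) : R :=
  sup [set vnorm (A *m x) | x in [set x : 'cV[C]_N | vnorm x <= 1]].

Definition expi (t : R) : C := Complex (cos t) (sin t).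

(* e^{i arg z} for z <> 0 *)
Definition phase (z : C) : C := z / `|z|.

Definition orthonormal_fam N (v : 'I_N -> 'cV[C]_N) :=
  forall i j, cinner (v i) (v j) = (i == j)%:R.

End Defs.

(* the two sides of the bipartite graph *)
Definition side0 : 'I_2 := ord0.
Definition side1 : 'I_2 := ord_max.

(* h : 'I_d -> 'I_N is the list of all indices satisfying P, in increasing
   order, padded by further distinct indices to exactly d distinct entries *)
Definition padded_list N d (P : pred 'I_N) (h : 'I_d -> 'I_N) :=
  injective h /\
  forall p : 'I_d, (p < size [seq q <- enum 'I_N | P q])%N ->
    nat_of_ord (h p) = nth 0%N [seq nat_of_ord q | q <- enum 'I_N & P q] p.

From mathcomp Require Import all_boot all_order all_algebra complex.
From mathcomp Require Import reals trigo.
From mathcomp Require Import ring lra.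

(* Each nonzero entry <phi_q|chi_j> of the sparse matrix A is an edge of the
   bipartite graph G, and the padded index lists give that edge exactly one
   colour (c1, c2); so A' has the same support as A, and its (q, j) entry is
   2^-B (\sum_b g) e^{i arg <phi_q|chi_j>} e^{-i theta_j}.  The sum over b
   equals k_{j,q} up to +-1, and k_{j,q} / 2^B approximates |<phi_q|chi_j>| up
   to 2^-B, so every entry of A' - A has modulus at most 2 / 2^B.  A matrix
   with at most d nonzero entries in each row and each column, all bounded by
   e, has spectral norm at most d e (Cauchy-Schwarz on each row, then count
   each column d times).  Hence ||A' - A|| <= 2 d / 2^B <= 2 d^2 / 2^B. *)

Set Implicit Arguments.
Unset Strict Implicit.
Unset Printing Implicit Defensive.
Import Order.TTheory GRing.Theory Num.Theory.
Local Open Scope ring_scope.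

Lemma padded_list_surj N d (P : pred 'I_N) (h : 'I_d -> 'I_N) : padded_list P h ->
  (#|[set q | P q]| <= d)%N -> forall x, P x -> exists p, h p = x.
Proof.
move=> [_ h_nth] card_le x Px.
have size_P : size [seq q <- enum 'I_N | P q] = #|[set q | P q]|.
  by rewrite cardsE cardE /enum_mem -filter_predI; congr size; apply: eq_filter => y; rewrite /= !inE andbT.
set s := [seq nat_of_ord q | q <- enum 'I_N & P q].
have x_in_s : nat_of_ord x \in s by rewrite map_f // mem_filter Px mem_enum.
have idx_lt : (index (nat_of_ord x) s < size [seq q <- enum 'I_N | P q])%N.
  by rewrite -(size_map (@nat_of_ord N)) index_mem.
have idx_lt_d : (index (nat_of_ord x) s < d)%N by rewrite (leq_trans idx_lt) // size_P.
exists (Ordinal idx_lt_d).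
by apply: val_inj; rewrite /= h_nth //= nth_index.
Qed.

Section EdgeColouring.
Variables (K : nzRingType) (N d : nat) (E : rel 'I_N) (f0 f1 : 'I_N -> 'I_d -> 'I_N).
Hypothesis f0_pad : forall j, padded_list (E ^~ j) (f0 j).
Hypothesis f1_pad : forall q, padded_list (E q) (f1 q).
Hypothesis deg0 : forall j, (#|[set q | E q j]| <= d)%N.
Hypothesis deg1 : forall q, (#|[set j | E q j]| <= d)%N.

Definition coloured_edge (c1 c2 : 'I_d) q j := [&& E q j, f0 j c1 == q & f1 q c2 == j].

(* The shape of the paper's A', with coefficient [G q j] on the edge |q><j|. *)
Definition coloured_mx (G : 'I_N -> 'I_N -> K) : 'M[K]_N :=
  \sum_(c1 < d) \sum_(c2 < d) \sum_(j < N | [exists q, coloured_edge c1 c2 q j])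
    G (f0 j c1) j *: delta_mx (f0 j c1) j.

Lemma coloured_edge_unique q j : E q j ->
  exists c1 c2, forall c1' c2', coloured_edge c1' c2' q j = (c1' == c1) && (c2' == c2).
Proof.
move=> Eqj.
have [c1 f0c1] := padded_list_surj (f0_pad j) (deg0 j) Eqj.
have [c2 f1c2] := padded_list_surj (f1_pad q) (deg1 q) Eqj.
exists c1, c2 => c1' c2'; rewrite /coloured_edge Eqj.
rewrite -[X in f0 j c1' == X]f0c1 -[X in f1 q c2' == X]f1c2.
by rewrite (inj_eq (f0_pad j).1) (inj_eq (f1_pad q).1).
Qed.

Lemma sum_coloured_edge (x : K) q j :
  \sum_c1 \sum_c2 (if coloured_edge c1 c2 q j then x else 0) = if E q j then x else 0.
Proof.
have [Eqj|nEqj] := boolP (E q j); last first.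
  by apply: big1 => c1 _; apply: big1 => c2 _; rewrite /coloured_edge (negbTE nEqj).
have [c1 [c2 colour]] := coloured_edge_unique Eqj.
under eq_bigr do under eq_bigr do rewrite colour.
rewrite (bigD1 c1) //= [X in _ + X]big1 ?addr0 => [|c1' c1'_neq]; last first.
  by apply: big1 => c2' _; rewrite (negbTE c1'_neq).
rewrite (bigD1 c2) //= !eqxx [X in _ + X]big1 ?addr0 // => c2' c2'_neq.
by rewrite (negbTE c2'_neq).
Qed.

Lemma coloured_mxE G q j : coloured_mx G q j = if E q j then G q j else 0.
Proof.
rewrite -sum_coloured_edge summxE; apply: eq_bigr => c1 _.
rewrite summxE; apply: eq_bigr => c2 _.
rewrite summxE big_mkcond (bigD1 j) //= big1 ?addr0 => [|j' j'j]; last first.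
  by case: ifP => // _; rewrite !mxE [j == j']eq_sym (negbTE j'j) andbF mulr0.
rewrite !mxE eqxx andbT.
have [e_qj|ne_qj] := boolP (coloured_edge c1 c2 q j).
  have /and3P [_ /eqP f0q _] := e_qj.
  by rewrite (introT existsP (ex_intro _ q e_qj)) f0q eqxx mulr1.
case: existsP => // [[q0 e_q0j]]; case: eqP => [q_f0|]; last by rewrite mulr0.
have /and3P [_ /eqP f0q0 _] := e_q0j.
by rewrite q_f0 f0q0 e_q0j in ne_qj.
Qed.
End EdgeColouring.

Lemma sqr_sum_le_card (F : realFieldType) (I : finType) (A : {set I}) (a : I -> F) :
  (\sum_(i in A) a i) ^+ 2 <= #|A|%:R * \sum_(i in A) a i ^+ 2.
Proof.
have sqr_diff_ge0 : 0 <= \sum_(i in A) \sum_(j in A) (a i - a j) ^+ 2.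
  by apply: sumr_ge0 => i _; apply: sumr_ge0 => j _; apply: sqr_ge0.
have expand : \sum_(i in A) \sum_(j in A) (a i - a j) ^+ 2
    = \sum_(i in A) (#|A|%:R * a i ^+ 2 + \sum_(j in A) a j ^+ 2
                     - 2 * a i * \sum_(j in A) a j).
  apply: eq_bigr => i _.
  have sqr_diff j : (a i - a j) ^+ 2 = a i ^+ 2 + a j ^+ 2 - 2 * a i * a j by ring.
  under eq_bigr do rewrite sqr_diff.
  rewrite sumrB big_split /= sumr_const -mulr_sumr; ring.
rewrite expand sumrB big_split /= sumr_const -mulr_sumr -mulr_suml -mulr_sumr in sqr_diff_ge0.
nra.
Qed.

Lemma sum_sparse_rows_le (F : numDomainType) N d (S : rel 'I_N) (u : 'I_N -> F) :
  (forall j, 0 <= u j) -> (forall j, #|[set q | S q j]| <= d)%N ->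
  \sum_q \sum_(j in [set j | S q j]) u j <= d%:R * \sum_j u j.
Proof.
move=> u_ge0 col_deg.
have -> : \sum_q \sum_(j in [set j | S q j]) u j = \sum_j \sum_(q in [set q | S q j]) u j.
  by rewrite (exchange_big_dep predT) //=; apply: eq_bigr => j _; apply: eq_bigl => q; rewrite !inE.
rewrite mulr_sumr; apply: ler_sum => j _.
by rewrite sumr_const -[_ *+ _]mulr_natl ler_wpM2r ?ler_nat.
Qed.

Section ComplexNorms.
Variable R : realType.
Local Notation C := R[i].
Local Open Scope complex_scope.

Lemma cabsE (z : C) : (cabs z)%:C = `|z|.
Proof. by rewrite normc_def. Qed.

Lemma cabs_ge0 (z : C) : 0 <= cabs z.
Proof. exact: sqrtr_ge0. Qed.

Lemma normc_real (r : R) : `|r%:C| = `|r|%:C :> C.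
Proof. by rewrite normc_def /= expr0n /= addr0 sqrtr_sqr. Qed.

Lemma norm_expi (t : R) : `|expi t| = 1 :> C.
Proof. by rewrite normc_def /= cos2Dsin2 sqrtr1. Qed.

Lemma norm_phase_le1 (z : C) : `|phase z| <= 1.
Proof.
rewrite /phase normf_div normr_id.
by have [->|z0] := eqVneq z 0; rewrite ?normr0 ?mul0r ?ler01 // divff ?normr_eq0.
Qed.

Lemma norm_mul_phase (z : C) : `|z| * phase z = z.
Proof.
have [->|z0] := eqVneq z 0; first by rewrite normr0 mul0r.
by rewrite /phase mulrC divfK ?normr_eq0.
Qed.

Lemma vnorm0 N : vnorm (0 : 'cV[C]_N) = 0.
Proof.
rewrite /vnorm big1 ?sqrtr0 // => k _.
by rewrite mxE /cabs /= expr0n /= addr0 sqrtr0 expr0n.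
Qed.

Lemma specnorm_le N (M : 'M[C]_N) (b : R) : 0 <= b ->
  (forall x, vnorm (M *m x) <= b * vnorm x) -> specnorm M <= b.
Proof.
move=> b_ge0 M_le; apply: ge_sup.
  by exists (vnorm (M *m 0)), 0; rewrite //= vnorm0 ler01.
move=> _ [x x_le1 <-]; apply: le_trans (M_le x) _.
by rewrite -[leRHS]mulr1 ler_wpM2l.
Qed.

Definition padded_sign_sum (m k : nat) : C :=
  \sum_(b < m) (if (b < k)%N then 1 else (-1) ^+ b).

Lemma padded_sign_sumE m k : padded_sign_sum m k
  = if (m <= k)%N then m%:R else k%:R + (if odd (m - k) then (-1) ^+ k else 0).
Proof.
rewrite /padded_sign_sum; elim: m => [|m IH]; first by rewrite big_ord0 leq0n.
rewrite big_ord_recr /= IH.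
case: (ltngtP m k) => [mk|km|->]; first by rewrite natr1.
- rewrite -addrA; congr (_ + _).
  rewrite subSn ?(ltnW km) //= -{2}(subnKC (ltnW km)) exprD.
  by rewrite -(signr_odd _ (m - k)); case: (odd (m - k));
    rewrite /= ?expr0 ?expr1 ?mulr1 ?mulrN1 ?add0r ?subrr.
- by rewrite subSn // subnn.
Qed.

Lemma padded_sign_sum_near m k : (k <= m)%N -> `|padded_sign_sum m k - k%:R| <= 1.
Proof.
move=> km; rewrite padded_sign_sumE; case: ifP => mk.
  by rewrite (@anti_leq m k) ?mk // subrr normr0 ler01.
rewrite addrAC subrr add0r; case: ifP => _; last by rewrite normr0 ler01.
by rewrite normrX normrN1 expr1n.
Qed.

Lemma padded_sign_sum_phase_approx (m k : nat) (z : C) :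
  (0 < m)%N -> (k <= m)%N -> `|m%:R * cabs z - k%:R| <= 1 ->
  `|m%:R^-1 * padded_sign_sum m k * phase z - z| <= (2 / m%:R)%:C.
Proof.
move=> m_gt0 km round_z.
have m0 : m%:R != 0 :> C by rewrite pnatr_eq0 -lt0n.
have err_sum : `|(padded_sign_sum m k - k%:R) + (k%:R - m%:R * `|z|)| <= 2.
  apply: le_trans (ler_normD _ _) _; rewrite -[2 : C]/(1 + 1).
  apply: lerD; first exact: padded_sign_sum_near.
  have -> : k%:R - m%:R * `|z| = (k%:R - m%:R * cabs z)%:C :> C.
    by rewrite -cabsE rmorphB rmorphM /= !rmorph_nat.
  by rewrite normc_real lecR distrC.
rewrite -[X in `|_ - X|]norm_mul_phase.
have -> : m%:R^-1 * padded_sign_sum m k * phase z - `|z| * phase z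
    = m%:R^-1 * ((padded_sign_sum m k - k%:R) + (k%:R - m%:R * `|z|)) * phase z.
  by field.
rewrite normrM -[leRHS]mulr1 ler_pM ?normr_ge0 ?norm_phase_le1 //.
rewrite normrM normfV normr_nat mulrC rmorphM /= fmorphV rmorph_nat.
by rewrite rmorph_nat ler_wpM2r ?invr_ge0 ?ler0n.
Qed.

Section SparseMatrix.
Variables (N d : nat) (M : 'M[C]_N) (S : rel 'I_N) (e : R).
Hypothesis e_ge0 : 0 <= e.
Hypothesis M_le : forall q j, `|M q j| <= e%:C.
Hypothesis M_supp : forall q j, ~~ S q j -> M q j = 0.
Hypothesis row_deg : forall q, (#|[set j | S q j]| <= d)%N.
Hypothesis col_deg : forall j, (#|[set q | S q j]| <= d)%N.

Lemma cabs_mulmx_le (x : 'cV[C]_N) q :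
  cabs ((M *m x) q 0) <= e * \sum_(j in [set j | S q j]) cabs (x j 0).
Proof.
rewrite -lecR cabsE rmorphM /= rmorph_sum /=.
under [X in _ <= _ * X]eq_bigr do rewrite cabsE.
rewrite mxE (bigID (mem [set j | S q j])) /= [X in _ + X]big1 ?addr0; last first.
  by move=> j; rewrite inE => /M_supp ->; rewrite mul0r.
apply: le_trans (ler_norm_sum _ _ _) _.
by rewrite mulr_sumr; apply: ler_sum => j _; rewrite normrM ler_wpM2r.
Qed.

Lemma sqr_cabs_mulmx_le (x : 'cV[C]_N) q :
  cabs ((M *m x) q 0) ^+ 2 <= d%:R * e ^+ 2 * \sum_(j in [set j | S q j]) cabs (x j 0) ^+ 2.
Proof.
set a := fun j => cabs (x j 0).
have sum_ge0 : 0 <= \sum_(j in [set j | S q j]) a j by apply: sumr_ge0 => j _; apply: cabs_ge0.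
apply: (@le_trans _ _ ((e * \sum_(j in [set j | S q j]) a j) ^+ 2)).
  by rewrite ler_sqr ?nnegrE ?cabs_ge0 ?mulr_ge0 // cabs_mulmx_le.
rewrite exprMn (mulrC d%:R) -(mulrA (e ^+ 2)) ler_wpM2l ?sqr_ge0 //.
apply: le_trans (sqr_sum_le_card _ _) _.
by rewrite ler_wpM2r ?ler_nat // sumr_ge0 // => j _; apply: sqr_ge0.
Qed.

Lemma vnorm_mulmx_sparse_le (x : 'cV[C]_N) : vnorm (M *m x) <= d%:R * e * vnorm x.
Proof.
set a := fun j => cabs (x j 0).
have sum_ge0 : 0 <= \sum_j a j ^+ 2 by apply: sumr_ge0 => j _; apply: sqr_ge0.
rewrite /vnorm -[d%:R * e]ger0_norm ?mulr_ge0 // -sqrtr_sqr -sqrtrM ?sqr_ge0 //.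
rewrite ler_sqrt ?mulr_ge0 ?sqr_ge0 //.
apply: le_trans (ler_sum _ (fun q _ => sqr_cabs_mulmx_le x q)) _.
have rows_le := @sum_sparse_rows_le _ _ _ S (fun j => a j ^+ 2) (fun j => sqr_ge0 _) col_deg.
rewrite -mulr_sumr (_ : (d%:R * e) ^+ 2 * _ = d%:R * e ^+ 2 * (d%:R * \sum_j a j ^+ 2)); last by ring.
by rewrite ler_wpM2l ?mulr_ge0 ?sqr_ge0.
Qed.

Lemma specnorm_sparse_le : specnorm M <= d%:R * e.
Proof. by apply: specnorm_le; [rewrite mulr_ge0 | exact: vnorm_mulmx_sparse_le]. Qed.

End SparseMatrix.
End ComplexNorms.

Arguments padded_sign_sum {R} m k.

Theorem mainTheorem3 (R : realType) (n d B : nat)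
  (chi phi : 'I_(2 ^ n) -> 'cV[R[i]]_(2 ^ n)) (theta : 'I_(2 ^ n) -> R)
  (f : 'I_2 -> 'I_(2 ^ n) -> 'I_d -> 'I_(2 ^ n))
  (k : 'I_(2 ^ n) -> 'I_(2 ^ n) -> nat) :
  (0 < n)%N -> (0 < d)%N -> (0 < B)%N ->
  orthonormal_fam chi -> orthonormal_fam phi ->
  (forall j, (#|[set q | cinner (phi q) (chi j) != 0%R]| <= d)%N) ->
  (forall q, (#|[set j | cinner (phi q) (chi j) != 0%R]| <= d)%N) ->
  (forall j, padded_list (fun q => cinner (phi q) (chi j) != 0%R) (f side0 j)) ->
  (forall q, padded_list (fun j => cinner (phi q) (chi j) != 0%R) (f side1 q)) ->
  (forall j q, (k j q <= 2 ^ B)%N /\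
     `|(2 ^ B)%:R * cabs (cinner (phi q) (chi j)) - (k j q)%:R| <= 1 :> R) ->
  let ip q j := cinner (phi q) (chi j) in
  let inV (c1 c2 : 'I_d) (j : 'I_(2 ^ n)) :=
    [exists q, [&& ip q j != 0%R, f side0 j c1 == q & f side1 q c2 == j]] in
  let g (j : 'I_(2 ^ n)) (c1 : 'I_d) (b : nat) : R[i] :=
    if (b < k j (f side0 j c1))%N then 1 else (-1) ^+ b in
  let A : 'M[R[i]]_(2 ^ n) :=
    \sum_(j < 2 ^ n) \sum_(q < 2 ^ n)
       (ip q j * expi (- theta j)) *: delta_mx q j in
  let A' : 'M[R[i]]_(2 ^ n) :=
    \sum_(c1 < d) \sum_(c2 < d) \sum_(j < 2 ^ n | inV c1 c2 j)
       ((2 ^ B)%:R^-1 * (\sum_(b < 2 ^ B) g j c1 b)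
         * (phase (ip (f side0 j c1) j) * expi (- theta j)))
         *: delta_mx (f side0 j c1) j in
  specnorm (A' - A) <= 2 * (d ^ 2)%:R / (2 ^ B)%:R.
Proof.
(* The [let]s of the statement sit under [is_true], so they are unfolded rather than introduced. *)
move=> _ d_gt0 _ _ _ deg0 deg1 pad0 pad1 round; cbv zeta.
pose ip q j := cinner (phi q) (chi j).
pose E : rel 'I_(2 ^ n) := fun q j => ip q j != 0.
pose G q j := (2 ^ B)%:R^-1 * padded_sign_sum (2 ^ B) (k j q) * (phase (ip q j) * expi (- theta j)).
have AE : \sum_(j < 2 ^ n) \sum_(q < 2 ^ n) (ip q j * expi (- theta j)) *: delta_mx q j
    = \matrix_(q, j) (ip q j * expi (- theta j)).
  rewrite [RHS]matrix_sum_delta exchange_big.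
  by apply: eq_bigr => j _; apply: eq_bigr => q _; rewrite mxE.
rewrite AE.
change (specnorm (coloured_mx E (f side0) (f side1) G - \matrix_(q, j) (ip q j * expi (- theta j)))
  <= 2 * (d ^ 2)%:R / (2 ^ B)%:R).
set D := (_ - _ : 'M_(2 ^ n)).
pose e : R := 2 / (2 ^ B)%:R.
have e_ge0 : 0 <= e by rewrite divr_ge0 ?ler0n.
have DE q j : D q j = if E q j then G q j - ip q j * expi (- theta j) else 0.
  rewrite !mxE coloured_mxE //; case: ifP => // /negbFE/eqP ->.
  by rewrite mul0r subrr.
have D_le q j : `|D q j| <= (e%:C)%C.
  rewrite DE; case: ifP => _; last by rewrite normr0 ler0c.
  rewrite /G mulrA -mulrBl normrM norm_expi mulr1.
  have [k_le round_k] := round j q.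
  by apply: padded_sign_sum_phase_approx; rewrite ?expn_gt0.
have D_supp q j : ~~ E q j -> D q j = 0 by move=> /negbTE nE; rewrite DE nE.
apply: le_trans (specnorm_sparse_le e_ge0 D_le D_supp deg1 deg0) _.
rewrite /e mulrA [d%:R * 2]mulrC ler_wpM2r ?invr_ge0 ?ler0n // ler_wpM2l // ler_nat.
by rewrite -mulnn leq_pmulr.
Qed.
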